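(* In the setting described in the context, for any $s\in\{1,\dots,T\}$, any $k\in\{1,\dots,K\}$ and any $0<\beta<1$, $$\mathbb{P}\left(\frac{(v^*_{ks})^2}{\sum_{t\neq s}(v^*_{kt})^2}\ge\frac{1}{T^\beta}\right)\le\frac{T^\beta+1}{T}.$$
   Context: Fixed inputs $\mathbf{x}_1,\dots,\mathbf{x}_N\in\mathbb{R}^d$. Networks $f_\theta(\mathbf{x})=\sum_{k=1}^K\mathbf{v}_k(\mathbf{w}_k^\top\mathbf{x}+b_k)_+$ with $\mathbf{w}_k\in\mathbb{S}^{d-1}$, $b_k\in\mathbb{R}$, $\mathbf{v}_k\in\mathbb{R}^T$, $K\ge N^2$. Training problem: $\min_\theta\sum_{i=1}^N\mathcal{L}(\mathbf{y}_i,f_\theta(\mathbf{x}_i))+\lambda\sum_{k=1}^K\|\mathbf{v}_k\|_2$, $\lambda>0$, with loss separable across tasks and lower semicontinuous in its second argument. The task label vectors $\mathbf{y}_{\cdot,t}$, $t=1,\dots,T$, are exchangeable random vectors, and the optimal output weights $\mathbf{v}_k^*=(v^*_{k1},\dots,v^*_{kT})$ are given by a measurable deterministic permutation-invariant selection map of the labels (permuting the $T$ label coordinates permutes the coordinates of all selected $\mathbf{v}_k^*$ identically). The ratio is $[0,\infty]$-valued: $\infty$ iff the denominator is $0$ and the numerator nonzero, and $0$ if both are $0$. *)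

From HB Require Import structures.
From mathcomp Require Import all_boot all_order all_algebra all_fingroup.
From mathcomp Require Import all_classical all_reals all_analysis.
Set Implicit Arguments. Unset Strict Implicit. Unset Printing Implicit Defensive.
Import Order.TTheory GRing.Theory Num.Theory.
Local Open Scope classical_set_scope.
Local Open Scope ring_scope.

(* Labels: a T-tuple of task label vectors y_{.,t}, each an N-tuple of reals
   (entry i of task t is the label y_{i t}).  The tuple types carry the
   product sigma-algebra (measure_tuple_display) over the Borel sets of R. *)
Definition labels (R : realType) (N T : nat) := T.-tuple (N.-tuple R).

Definition label_entry (R : realType) N T (L : labels R N T) (i : 'I_N) (t : 'I_T) : R :=
  tnth (tnth L t) i.

Definition perm_labels (R : realType) N T (s : 'S_T) (L : labels R N T) : labels R N T :=
  [tuple tnth L (s i) | i < T].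

Definition exchangeable_labels (R : realType) (d : measure_display)
  (Omega : measurableType d) (P : probability Omega R) N T
  (Y : Omega -> labels R N T) : Prop :=
  forall (s : 'S_T) (A : set (labels R N T)), measurable A ->
    P (Y @^-1` A) = P ((perm_labels s \o Y) @^-1` A).

(* Parameters theta = (w_k, b_k, v_k)_{k<K} of a width-K shallow ReLU network
   R^dim -> R^T. *)
Record params (R : realType) (K dim T : nat) := Params {
  pw : 'I_K -> 'I_dim -> R ;
  pb : 'I_K -> R ;
  pv : 'I_K -> 'I_T -> R }.

Definition relu (R : realType) (z : R) : R := Num.max 0 z.

Definition net (R : realType) K dim T (th : params R K dim T) (x : 'I_dim -> R)
  (t : 'I_T) : R :=
  \sum_(k < K) pv th k t * relu (\sum_(j < dim) pw th k j * x j + pb th k).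

Definition feasible (R : realType) K dim T (th : params R K dim T) : Prop :=
  forall k, \sum_(j < dim) pw th k j ^+ 2 = 1.

Definition vnorm (R : realType) K dim T (th : params R K dim T) (k : 'I_K) : R :=
  Num.sqrt (\sum_(t < T) pv th k t ^+ 2).

(* Training objective with a loss separable across tasks:
   L(y, yhat) = sum_t loss t (y_t) (yhat_t). *)
Definition objective (R : realType) N K dim T (x : 'I_N -> 'I_dim -> R)
  (loss : 'I_T -> R -> R -> \bar R) (lam : R) (L : labels R N T)
  (th : params R K dim T) : \bar R :=
  (\sum_(i < N) \sum_(t < T) loss t (label_entry L i t) (net th (x i) t)
   + (lam * \sum_(k < K) vnorm th k)%:E)%E.

Definition is_minimizer (R : realType) N K dim T (x : 'I_N -> 'I_dim -> R)
  (loss : 'I_T -> R -> R -> \bar R) (lam : R) (L : labels R N T)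
  (th : params R K dim T) : Prop :=
  feasible th /\
  forall th' : params R K dim T, feasible th' ->
    (objective x loss lam L th <= objective x loss lam L th')%E.

(* [0,+oo]-valued ratio a / b: +oo iff b = 0 and a <> 0, and 0 if a = b = 0 *)
Definition eratio (R : realType) (a b : R) : \bar R :=
  if b == 0 then (if a == 0 then 0%E else +oo%E) else (a / b)%:E.

From HB Require Import structures.
From mathcomp Require Import all_boot all_order all_algebra all_fingroup.
From mathcomp Require Import all_classical all_reals all_analysis.
From mathcomp Require Import lra measurable_realfun measurable_fun_approximation.
Set Implicit Arguments. Unset Strict Implicit. Unset Printing Implicit Defensive.
Import Order.TTheory GRing.Theory Num.Theory.
Import numFieldTopology.Exports.
Local Open Scope classical_set_scope.
Local Open Scope ring_scope.

(* Fix the neuron k, put a_t = (v*_{kt})^2 and c = T^-beta.  The event is that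
   task s is c-dominant: a_s <> 0 and a_s >= c * sum_{t <> s} a_t.  A dominant
   task carries at least a c/(1+c) share of sum_t a_t, so at most 1 + 1/c tasks
   are dominant at once.  By exchangeability of the labels and equivariance of
   the selection, every task is dominant with the same probability p, hence
   T p <= E[#dominant tasks] <= 1 + T^beta. *)

Definition dominant (R : numDomainType) (I : finType) (c : R) (a : I -> R)
    (i : I) : bool :=
  (a i != 0) && (c * \sum_(j | j != i) a j <= a i).

Lemma lee_eratio (R : realType) (a b c : R) : 0 <= a -> 0 <= b -> 0 < c ->
  (c%:E <= eratio a b)%E = (a != 0) && (c * b <= a).
Proof.
move=> a_ge0 b_ge0 c_gt0; rewrite /eratio.
have [->|b_neq0] := eqVneq b 0.
  rewrite mulr0 a_ge0 andbT.
  by case: eqVneq => _; rewrite ?leey // lee_fin leNgt c_gt0.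
have b_gt0 : 0 < b by rewrite lt_def b_neq0.
rewrite lee_fin ler_pdivlMr //; have [->|//] := eqVneq a 0.
by rewrite leNgt mulr_gt0.
Qed.

Lemma dominant_perm (R : numDomainType) (I : finType) (c : R) (a : I -> R)
    (s : {perm I}) (i : I) :
  dominant c (fun j => a (s j)) i = dominant c a (s i).
Proof.
rewrite /dominant [X in _ = _ && (c * X <= _)](reindex_inj (@perm_inj _ s)) /=.
by under [X in _ = _ && (c * X <= _)]eq_bigl do rewrite (inj_eq perm_inj).
Qed.

Lemma card_dominant_le (R : realFieldType) (I : finType) (c : R) (a : I -> R) :
  0 < c -> (forall i, 0 <= a i) -> #|[pred i | dominant c a i]|%:R <= 1 + c^-1.
Proof.
move=> c_gt0 a_ge0; set D := [pred i | dominant c a i]; set S := \sum_i a i.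
have cinv_gt0 : 0 < c^-1 by rewrite invr_gt0.
case: (pickP D) => [i Di|D0]; last by rewrite eq_card0 //; lra.
have share j : j \in D -> c * S <= (1 + c) * a j.
  rewrite inE => /andP[_ others].
  by rewrite /S (bigD1 j) //= mulrDr mulrDl mul1r; lra.
have S_gt0 : 0 < S.
  move: Di; rewrite inE => /andP[ai_neq0 _].
  have ai_gt0 : 0 < a i by rewrite lt_def ai_neq0 a_ge0.
  rewrite /S (bigD1 i) //=.
  have : 0 <= \sum_(j | j != i) a j by apply: sumr_ge0 => j _.
  lra.
have sumD_le : \sum_(j in D) a j <= S.
  by rewrite /S [X in _ <= X](bigID (mem D)) /= lerDl sumr_ge0.
have : #|D|%:R * (c * S) <= (1 + c) * S.
  rewrite mulr_natl -sumr_const.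
  apply: (le_trans _ (ler_wpM2l _ sumD_le)); last lra.
  by rewrite [X in _ <= X]mulr_sumr; exact: ler_sum.
rewrite mulrA ler_pM2r // => nc_le.
rewrite -(ler_pM2r c_gt0) mulrDl mulVf ?gt_eqF //; lra.
Qed.

Lemma measurable_dominant (R : realType) d (X : measurableType d) (I : finType)
    (c : R) (a : I -> X -> R) (i : I) :
  (forall j, measurable_fun setT (a j)) ->
  measurable [set x | dominant c (a ^~ x) i].
Proof.
move=> ma.
have m_others : measurable_fun setT (fun x => \sum_(j | j != i) a j x).
  under eq_fun do rewrite big_mkcond /=.
  apply: measurable_sum => j; case: (j != i) => //; exact: measurable_cst.
have m_dom : measurable_fun setT (fun x => dominant c (a ^~ x) i).
  apply: measurable_and; first exact/measurable_neg/measurable_fun_eqr.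
  by apply: measurable_fun_ler => //; exact: measurable_funM.
by rewrite -[X in measurable X]setTI; exact: (m_dom measurableT [set true]).
Qed.

Lemma sum_probability_le_indic_bound (R : realType) d (Omega : measurableType d)
    (P : probability Omega R) (I : finType) (E : I -> set Omega) (M : R) :
  (forall i, measurable (E i)) -> (forall w, \sum_i \1_(E i) w <= M) ->
  (\sum_i P (E i) <= M%:E)%E.
Proof.
move=> mE hM.
have mI i : measurable_fun setT (fun w => (\1_(E i) w)%:E : \bar R).
  exact/measurable_EFinP/measurable_indic.
rewrite (eq_bigr (fun i => \int[P]_w (\1_(E i) w)%:E)%E); last first.
  by move=> i _; rewrite integral_indic // setIT.
rewrite -ge0_integral_sum // -[M%:E]mule1 -(probability_setT P) -integral_cst //.
apply: ge0_le_integral => //.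
- by move=> w _; apply: sume_ge0 => i _; rewrite lee_fin.
- exact: emeasurable_sum.
- by move=> w _; rewrite sumEFin lee_fin.
Qed.

Definition dominant_labels (R : realType) N K dim T
    (sel : labels R N T -> params R K dim T) (k : 'I_K) (c : R) (t : 'I_T) :
    set (labels R N T) :=
  [set L | dominant c (fun u => pv (sel L) k u ^+ 2) t].

Lemma preimage_perm_dominant_labels (R : realType) N K dim T
    (sel : labels R N T -> params R K dim T) (k : 'I_K) (c : R)
    (s : 'S_T) (t : 'I_T) :
  (forall L u, pv (sel (perm_labels s L)) k u = pv (sel L) k (s u)) ->
  perm_labels s @^-1` dominant_labels sel k c t = dominant_labels sel k c (s t).
Proof.
move=> sel_perm; apply/funext => L; rewrite /dominant_labels /preimage /=.
rewrite -dominant_perm; congr (is_true (dominant _ _ _)).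
by apply/funext => u; rewrite sel_perm.
Qed.

Theorem lemma4 (R : realType) (N dim K T : nat)
  (x : 'I_N -> 'I_dim -> R) (hK : (N ^ 2 <= K)%N)
  (loss : 'I_T -> R -> R -> \bar R)
  (hloss : forall (t : 'I_T) (y : R), lower_semicontinuous (loss t y))
  (lam : R) (hlam : 0 < lam)
  (d : measure_display) (Omega : measurableType d) (P : probability Omega R)
  (Y : Omega -> labels R N T) (mY : measurable_fun setT Y)
  (hexch : exchangeable_labels P Y)
  (sel : labels R N T -> params R K dim T)
  (hsel_opt : forall L, is_minimizer x loss lam L (sel L))
  (hsel_meas : forall (k : 'I_K) (t : 'I_T),
      measurable_fun setT (fun L => pv (sel L) k t))
  (hsel_perm : forall (s : 'S_T) (L : labels R N T) (k : 'I_K) (t : 'I_T),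
      pv (sel (perm_labels s L)) k t = pv (sel L) k (s t))
  (s : 'I_T) (k : 'I_K) (beta : R) (hb0 : 0 < beta) (hb1 : beta < 1) :
  (P [set w | (eratio (pv (sel (Y w)) k s ^+ 2)
                     (\sum_(t < T | t != s) pv (sel (Y w)) k t ^+ 2)
              >= ((T%:R `^ beta)^-1)%:E)%E]
  <= ((T%:R `^ beta + 1) / T%:R)%:E)%E.
Proof.
have T_gt0 : (0 < T)%N by apply: leq_ltn_trans (ltn_ord s).
have Tb_gt0 : 0 < T%:R `^ beta by rewrite powR_gt0 // ltr0n.
set c := (T%:R `^ beta)^-1.
have c_gt0 : 0 < c by rewrite invr_gt0.
pose A := dominant_labels sel k c.
have mA t : measurable (A t).
  by apply: measurable_dominant => u; exact/measurable_funX.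
have mYA t : measurable (Y @^-1` A t) by rewrite -[_ @^-1` _]setTI; exact: mY.
have -> : [set w | (c%:E <= eratio (pv (sel (Y w)) k s ^+ 2)
    (\sum_(t < T | t != s) pv (sel (Y w)) k t ^+ 2))%E] = Y @^-1` A s.
  apply/funext => w; rewrite /= lee_eratio ?sqr_ge0 ?sumr_ge0 //.
  by move=> u _; exact: sqr_ge0.
have PYA t : P (Y @^-1` A t) = P (Y @^-1` A s).
  by rewrite [RHS](hexch (tperm s t) _ (mA s)) comp_preimage
    preimage_perm_dominant_labels ?tpermL.
have sum_le : (\sum_t P (Y @^-1` A t) <= (1 + c^-1)%:E)%E.
  apply: sum_probability_le_indic_bound => // w.
  pose a u := pv (sel (Y w)) k u ^+ 2.
  rewrite (eq_bigr (fun t => if dominant c a t then 1 else 0)); last first.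
    move=> t _; rewrite indicE; case: ifPn => h.
      by rewrite mem_set.
    by rewrite memNset //; exact/negP.
  rewrite -big_mkcond sumr_const.
  exact: card_dominant_le (fun u => sqr_ge0 _).
have PYA_fin : P (Y @^-1` A s) \is a fin_num by rewrite fin_num_measure.
rewrite (eq_bigr _ (fun t _ => PYA t)) -(fineK PYA_fin) sumEFin in sum_le.
rewrite sumr_const card_ord in sum_le.
rewrite -(fineK PYA_fin) lee_fin ler_pdivlMr ?ltr0n // mulr_natr addrC.
rewrite -[T%:R `^ beta]invrK.
by rewrite lee_fin in sum_le.
Qed.
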